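(* Let $(H,\beta)$ be a monoidal Hom-bialgebra and let $(A,\alpha)$ be a left $(H,\beta)$-Hom-comodule algebra with left Hom-coaction $\varphi:A\to H\otimes A$, $\varphi(a)=a_{(-1)}\otimes a_{(0)}$. Let $(\Gamma,\gamma)$ be a first order differential calculus over $(A,\alpha)$ with differential $d:A\to\Gamma$. Then the following are equivalent: (1) $(\Gamma,\gamma)$ is left-covariant with respect to $(H,\beta)$; (2) there is a morphism $\phi:(\Gamma,\gamma)\to(H\otimes\Gamma,\beta\otimes\gamma)$ in $\widetilde{\mathcal{H}}(\mathcal{M}_k)$ such that $\phi(a\cdot db)=\varphi(a)\,(\mathrm{id}\otimes d)(\varphi(b))$ for all $a,b\in A$; (3) for all finite families $a_i,b_i\in A$, $\sum_i a_i\cdot db_i=0$ in $\Gamma$ implies $\sum_i\varphi(a_i)\,(\mathrm{id}\otimes d)(\varphi(b_i))=0$ in $H\otimes\Gamma$.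
   Context: All vector spaces are over a field $k$. $\widetilde{\mathcal{H}}(\mathcal{M}_k)$ is the category whose objects are pairs $(M,\mu)$ with $M$ a $k$-vector space and $\mu$ a linear automorphism of $M$, and whose morphisms $f:(M,\mu)\to(N,\nu)$ are linear maps with $\nu\circ f=f\circ\mu$; tensor product $(M\otimes N,\mu\otimes\nu)$. A monoidal Hom-algebra $(A,\alpha)$ is an object with multiplication $a\otimes b\mapsto ab$ and unit $1_A$ such that $\alpha(ab)=\alpha(a)\alpha(b)$, $\alpha(1_A)=1_A$, $\alpha(a)(bc)=(ab)\alpha(c)$, $1_Aa=a1_A=\alpha(a)$. A monoidal Hom-coalgebra $(C,\beta)$ is an object with comultiplication $\Delta(c)=c_1\otimes c_2$ and counit $\varepsilon$ satisfying $\Delta\circ\beta=(\beta\otimes\beta)\circ\Delta$, $\varepsilon\circ\beta=\varepsilon$, $\beta^{-1}(c_1)\otimes c_{21}\otimes c_{22}=c_{11}\otimes c_{12}\otimes\beta^{-1}(c_2)$, $\varepsilon(c_1)c_2=c_1\varepsilon(c_2)=\beta^{-1}(c)$. A monoidal Hom-bialgebra is both, with $\Delta,\varepsilon$ multiplicative and unital. Left Hom-module $(M,\mu)$ over $(A,\alpha)$: a morphism $a\otimes m\mapsto a\cdot m$ with $\alpha(a)\cdot(b\cdot m)=(ab)\cdot\mu(m)$, $1_A\cdot m=\mu(m)$; right Hom-module: $(m\cdot a)\cdot\alpha(b)=\mu(m)\cdot(ab)$, $m\cdot 1_A=\mu(m)$; Hom-bimodule: both, with $\alpha(a)\cdot(m\cdot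 b)=(a\cdot m)\cdot\alpha(b)$. A left $(H,\beta)$-Hom-comodule $(M,\mu)$ is given by a morphism $\rho:M\to H\otimes M$, $\rho(m)=m_{(-1)}\otimes m_{(0)}$, with $\beta^{-1}(m_{(-1)})\otimes m_{(0)(-1)}\otimes m_{(0)(0)}=m_{(-1)1}\otimes m_{(-1)2}\otimes\mu^{-1}(m_{(0)})$ and $\varepsilon(m_{(-1)})m_{(0)}=\mu^{-1}(m)$. A left $(H,\beta)$-Hom-comodule algebra $(A,\alpha)$ is a monoidal Hom-algebra which is a left $(H,\beta)$-Hom-comodule via $\varphi$ with $\varphi(ab)=a_{(-1)}b_{(-1)}\otimes a_{(0)}b_{(0)}$ and $\varphi(1_A)=1_H\otimes 1_A$. A first order differential calculus (Hom-FODC) over $(A,\alpha)$ is an $(A,\alpha)$-Hom-bimodule $(\Gamma,\gamma)$ with a linear map $d:A\to\Gamma$ such that $d(ab)=a\cdot db+da\cdot b$, $d\circ\alpha=\gamma\circ d$, and $\Gamma$ is spanned by the elements $(a\cdot db)\cdot c$, $a,b,c\in A$. The space $H\otimes\Gamma$ carries the structures $(h\otimes a)(h'\otimes\omega)=hh'\otimes a\cdot\omega$ and $(h'\otimes\omega)(h\otimes a)=h'h\otimes\omega\cdot a$; thus $\varphi(a)(\mathrm{id}\otimes d)(\varphi(b))=a_{(-1)}b_{(-1)}\otimes a_{(0)}\cdot db_{(0)}$. The Hom-FODC $(\Gamma,\gamma)$ is left-covariant with respect to $(H,\beta)$ if there is a left Hom-coaction $\phi:\Gamma\to H\otimes\Gamma$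 of $(H,\beta)$ on $(\Gamma,\gamma)$ such that $\phi(\alpha(a)\cdot(\omega\cdot b))=\varphi(\alpha(a))(\phi(\omega)\varphi(b))$ for all $a,b\in A$, $\omega\in\Gamma$, and $\phi(da)=(\mathrm{id}\otimes d)\varphi(a)$ for all $a\in A$. *)

(* Elements of a tensor product U (x) V are represented by finite formal sums,
   i.e. lists s : seq (U * V) standing for \sum_(x <- s) x.1 (x) x.2; two such
   lists denote the same element of U (x) V iff every bilinear map out of U x V
   (into any k-vector space) takes the same value on them (universal property
   of the tensor product).  Triple tensors likewise with trilinear maps. *)
From HB Require Import structures.
From mathcomp Require Import all_boot all_order all_algebra.
Set Implicit Arguments. Unset Strict Implicit. Unset Printing Implicit Defensive.
Import Order.TTheory GRing.Theory Num.Theory.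
Local Open Scope ring_scope.

Section HomDefs.
Variable k : fieldType.

Definition klinear (U V : lmodType k) (f : U -> V) : Prop :=
  forall (a : k) (x y : U), f (a *: x + y) = a *: f x + f y.

Definition kbilinear (U V W : lmodType k) (f : U -> V -> W) : Prop :=
  (forall (a : k) (u1 u2 : U) (v : V), f (a *: u1 + u2) v = a *: f u1 v + f u2 v) /\
  (forall (a : k) (u : U) (v1 v2 : V), f u (a *: v1 + v2) = a *: f u v1 + f u v2).

Definition ktrilinear (U V W X : lmodType k) (f : U -> V -> W -> X) : Prop :=
  (forall (a : k) u1 u2 v w, f (a *: u1 + u2) v w = a *: f u1 v w + f u2 v w) /\
  (forall (a : k) u v1 v2 w, f u (a *: v1 + v2) w = a *: f u v1 w + f u v2 w) /\
  (forall (a : k) u v w1 w2, f u v (a *: w1 + w2) = a *: f u v w1 + f u v w2).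

Definition tensor (U V : lmodType k) := seq (U * V).
Definition tensor3 (U V W : lmodType k) := seq (U * V * W).

Definition teq (U V : lmodType k) (s t : tensor U V) : Prop :=
  forall (X : lmodType k) (f : U -> V -> X), kbilinear f ->
    \sum_(x <- s) f x.1 x.2 = \sum_(x <- t) f x.1 x.2.

Definition teq3 (U V W : lmodType k) (s t : tensor3 U V W) : Prop :=
  forall (X : lmodType k) (f : U -> V -> W -> X), ktrilinear f ->
    \sum_(x <- s) f x.1.1 x.1.2 x.2 = \sum_(x <- t) f x.1.1 x.1.2 x.2.

(* scalar multiple of a tensor; sum of tensors is concatenation *)
Definition tscale (U V : lmodType k) (a : k) (s : tensor U V) : tensor U V :=
  [seq (a *: x.1, x.2) | x <- s].

Definition tmap (U V U' V' : lmodType k) (f : U -> U') (g : V -> V')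
  (s : tensor U V) : tensor U' V' := [seq (f x.1, g x.2) | x <- s].

Definition tlinear (X U V : lmodType k) (f : X -> tensor U V) : Prop :=
  forall (a : k) (x y : X), teq (f (a *: x + y)) (tscale a (f x) ++ f y).

Definition tmul (H M N P : lmodType k) (mulH : H -> H -> H) (m : M -> N -> P)
  (s : tensor H M) (t : tensor H N) : tensor H P :=
  [seq (mulH x.1 y.1, m x.2 y.2) | x <- s, y <- t].

(* ---------- objects of H~(M_k): (M, mu) with mu a linear automorphism,
   mui its inverse ---------- *)
Definition hobj (M : lmodType k) (mu mui : M -> M) : Prop :=
  klinear mu /\ cancel mu mui /\ cancel mui mu.

Definition hom_algebra (A : lmodType k) (al ali : A -> A)
  (mul : A -> A -> A) (one : A) : Prop :=
  ((hobj al ali) /\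
      (kbilinear mul) /\
      ((forall a b, al (mul a b) = mul (al a) (al b))) /\
      (al one = one) /\
      ((forall a b c, mul (al a) (mul b c) = mul (mul a b) (al c))) /\
      ((forall a, mul one a = al a /\ mul a one = al a))).

Definition hom_coalgebra (C : lmodType k) (be bei : C -> C)
  (Delta : C -> tensor C C) (eps : C -> k) : Prop :=
  ((hobj be bei) /\
      (tlinear Delta) /\
      (klinear (eps : C -> k^o)) /\
      ((forall c, teq (Delta (be c)) (tmap be be (Delta c)))) /\
      ((forall c, eps (be c) = eps c)) /\
      ((forall c, teq3 [seq (bei x.1, y.1, y.2) | x <- Delta c, y <- Delta x.2]
                      [seq (y.1, y.2, bei x.2) | x <- Delta c, y <- Delta x.1])) /\
      ((forall c, \sum_(x <- Delta c) eps x.1 *: x.2 = bei c /\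
                 \sum_(x <- Delta c) eps x.2 *: x.1 = bei c))).

Definition hom_bialgebra (H : lmodType k) (be bei : H -> H)
  (mul : H -> H -> H) (one : H) (Delta : H -> tensor H H) (eps : H -> k) : Prop :=
  ((hom_algebra be bei mul one) /\
      (hom_coalgebra be bei Delta eps) /\
      ((forall a b, teq (Delta (mul a b)) (tmul mul mul (Delta a) (Delta b)))) /\
      (teq (Delta one) [:: (one, one)]) /\
      ((forall a b, eps (mul a b) = eps a * eps b)) /\
      (eps one = 1)).

Definition hom_comodule (H : lmodType k) (be bei : H -> H)
  (Delta : H -> tensor H H) (eps : H -> k)
  (M : lmodType k) (mu mui : M -> M) (rho : M -> tensor H M) : Prop :=
  ((hobj mu mui) /\
      (tlinear rho) /\
      ((forall m, teq (rho (mu m)) (tmap be mu (rho m)))) /\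
      ((forall m, teq3 [seq (bei x.1, y.1, y.2) | x <- rho m, y <- rho x.2]
                      [seq (y.1, y.2, mui x.2) | x <- rho m, y <- Delta x.1])) /\
      ((forall m, \sum_(x <- rho m) eps x.1 *: x.2 = mui m))).

Definition hom_comodule_algebra (H : lmodType k) (be bei : H -> H)
  (mulH : H -> H -> H) (oneH : H) (Delta : H -> tensor H H) (eps : H -> k)
  (A : lmodType k) (al ali : A -> A) (mulA : A -> A -> A) (oneA : A)
  (rho : A -> tensor H A) : Prop :=
  ((hom_algebra al ali mulA oneA) /\
      (hom_comodule be bei Delta eps al ali rho) /\
      ((forall a b, teq (rho (mulA a b)) (tmul mulH mulA (rho a) (rho b)))) /\
      (teq (rho oneA) [:: (oneH, oneA)])).

Definition hom_bimodule (A : lmodType k) (al : A -> A) (mulA : A -> A -> A)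
  (oneA : A) (G : lmodType k) (ga gai : G -> G)
  (la : A -> G -> G) (ra : G -> A -> G) : Prop :=
  ((hobj ga gai) /\
      (kbilinear la) /\
      (kbilinear ra) /\
      ((forall a m, ga (la a m) = la (al a) (ga m))) /\
      ((forall m a, ga (ra m a) = ra (ga m) (al a))) /\
      ((forall a b m, la (al a) (la b m) = la (mulA a b) (ga m) /\ la oneA m = ga m)) /\
      ((forall m a b, ra (ra m a) (al b) = ra (ga m) (mulA a b) /\ ra m oneA = ga m)) /\
      ((forall a m b, la (al a) (ra m b) = ra (la a m) (al b)))).

Definition hom_FODC (A : lmodType k) (al : A -> A) (mulA : A -> A -> A)
  (oneA : A) (G : lmodType k) (ga gai : G -> G)
  (la : A -> G -> G) (ra : G -> A -> G) (d : A -> G) : Prop :=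
  ((hom_bimodule al mulA oneA ga gai la ra) /\
      (klinear d) /\
      ((forall a b, d (mulA a b) = la a (d b) + ra (d a) b)) /\
      ((forall a, d (al a) = ga (d a))) /\
      ((forall w : G, exists s : seq (A * A * A),
          w = \sum_(x <- s) ra (la x.1.1 (d x.1.2)) x.2))).

Definition left_covariant (H : lmodType k) (be bei : H -> H)
  (mulH : H -> H -> H) (Delta : H -> tensor H H) (eps : H -> k)
  (A : lmodType k) (al : A -> A) (rho : A -> tensor H A)
  (G : lmodType k) (ga gai : G -> G)
  (la : A -> G -> G) (ra : G -> A -> G) (d : A -> G) : Prop :=
  exists phi : G -> tensor H G,
    ((hom_comodule be bei Delta eps ga gai phi) /\
      ((forall a b w, teq (phi (la (al a) (ra w b)))
                           (tmul mulH la (rho (al a)) (tmul mulH ra (phi w) (rho b))))) /\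
      ((forall a, teq (phi (d a)) (tmap id d (rho a))))).

End HomDefs.

(* A Hom-FODC is spanned by the forms [a.db], because
   [(a.db).al(c) = al(a).d(bc) - ab.d(al c)]; hence two linear maps out of
   Gamma agree as soon as they agree on the forms [a.db] ([dform_ext]).
   (2) => (3) is then immediate.  For (3) => (2), write each w as a sum of
   forms [a_i.db_i] and send it to the sum of the [phi(a_i)(id (x) d)phi(b_i)];
   condition (3) says exactly that this does not depend on the chosen
   representation.  For (2) => (1), every axiom of a covariant coaction is an
   identity between maps that are linear in w, so it suffices to check it on
   [a.db], where it reduces to the comodule-algebra axioms of A and the
   bialgebra axioms of H.  Conversely (1) => (2) follows by applying
   covariance to [a.db = al(ali a).(d(ali b).1)]. *)

From HB Require Import structures.
From mathcomp Require Import all_boot all_order all_algebra.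
From Stdlib Require Import ClassicalEpsilon.
Import GRing.Theory.
Local Open Scope ring_scope.
Set Implicit Arguments. Unset Strict Implicit.

Section Multilinear.
Variable k : fieldType.
Implicit Types U V W X Y : lmodType k.

Section LinearMap.
Variables (U V : lmodType k) (f : U -> V).
Hypothesis f_lin : klinear f.

(* [klinear f] is literally MathComp's [linear f]. *)
Definition klinear_linear : {linear U -> V} :=
  HB.pack f (GRing.isLinear.Build _ _ _ _ f f_lin).

Lemma klinear0 : f 0 = 0. Proof. exact: (raddf0 klinear_linear). Qed.

Lemma klinearN x : f (- x) = - f x. Proof. exact: (raddfN klinear_linear). Qed.

Lemma klinearB x y : f (x - y) = f x - f y.
Proof. exact: (raddfB klinear_linear). Qed.

Lemma klinearZ a x : f (a *: x) = a *: f x.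
Proof. exact: (linearZ_LR klinear_linear). Qed.

Lemma klinear_sum I (s : seq I) (F : I -> U) :
  f (\sum_(i <- s) F i) = \sum_(i <- s) f (F i).
Proof. exact: (raddf_sum klinear_linear). Qed.

Lemma klinear_can (g : V -> U) : cancel f g -> cancel g f -> klinear g.
Proof. by move=> fK gK a x y; apply: (can_inj fK); rewrite f_lin !gK. Qed.

End LinearMap.

Lemma klinear_id U : klinear (@id U). Proof. by []. Qed.

Lemma klinear_comp U V W (g : V -> W) (f : U -> V) :
  klinear g -> klinear f -> klinear (fun x => g (f x)).
Proof. by move=> g_lin f_lin a x y; rewrite f_lin g_lin. Qed.

Lemma sum_klinear U V I (s : seq I) (F : I -> U -> V) :
  (forall i, klinear (F i)) -> klinear (fun x => \sum_(i <- s) F i x).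
Proof.
move=> F_lin a x y; rewrite scaler_sumr -big_split.
by apply: eq_bigr => i _; apply: F_lin.
Qed.

Lemma kbilinearl U V W (f : U -> V -> W) v : kbilinear f -> klinear (f^~ v).
Proof. by move=> [f_lin _] a x y; apply: f_lin. Qed.

Lemma kbilinearr U V W (f : U -> V -> W) u : kbilinear f -> klinear (f u).
Proof. by move=> [_ f_lin] a x y; apply: f_lin. Qed.

Lemma kbilinear_lr U V W (f : U -> V -> W) :
  (forall v, klinear (f^~ v)) -> (forall u, klinear (f u)) -> kbilinear f.
Proof. by move=> fl fr; split=> a x y z; [apply: fl | apply: fr]. Qed.

Lemma kbilinear_comp U V U' V' W (f : U' -> V' -> W) (g : U -> U') (h : V -> V') :
  kbilinear f -> klinear g -> klinear h -> kbilinear (fun u v => f (g u) (h v)).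
Proof.
move=> f_bil g_lin h_lin; apply: kbilinear_lr => [v|u].
  exact: (klinear_comp (g := f^~ (h v)) (kbilinearl _ f_bil) g_lin).
exact: klinear_comp (kbilinearr _ f_bil) h_lin.
Qed.

Lemma sum_kbilinear U V W I (s : seq I) (F : I -> U -> V -> W) :
  (forall i, kbilinear (F i)) -> kbilinear (fun u v => \sum_(i <- s) F i u v).
Proof.
move=> F_bil; apply: kbilinear_lr => [v|u]; apply: sum_klinear => i.
  exact: kbilinearl.
exact: kbilinearr.
Qed.

Lemma scale_kbilinear U V (e : U -> k^o) : klinear e -> kbilinear (fun u (v : V) => e u *: v).
Proof.
move=> e_lin; apply: kbilinear_lr => [v|u] a x y; first by rewrite e_lin scalerDl scalerA.
by rewrite scalerDr !scalerA mulrC.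
Qed.

Lemma sum_kbilinearZ U V W (g : U -> V -> W) (r : seq (U * V)) c : kbilinear g ->
  \sum_(x <- r) g (c *: x.1) x.2 = c *: \sum_(x <- r) g x.1 x.2.
Proof.
move=> g_bil; rewrite scaler_sumr; apply: eq_bigr => x _.
exact: (klinearZ (kbilinearl _ g_bil)).
Qed.

Lemma sum_kbilinearN U V W (g : U -> V -> W) (r : seq (U * V)) : kbilinear g ->
  \sum_(x <- r) g (- x.1) x.2 = - \sum_(x <- r) g x.1 x.2.
Proof.
move=> g_bil; rewrite -sumrN; apply: eq_bigr => x _.
exact: (klinearN (kbilinearl _ g_bil)).
Qed.

Lemma ktrilinear1 U V W X (F : U -> V -> W -> X) v w :
  ktrilinear F -> klinear (fun u => F u v w).
Proof. by move=> [F_lin _] a x y; apply: F_lin. Qed.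

Lemma ktrilinear2 U V W X (F : U -> V -> W -> X) u w :
  ktrilinear F -> klinear (fun v => F u v w).
Proof. by move=> [_ [F_lin _]] a x y; apply: F_lin. Qed.

Lemma ktrilinear3 U V W X (F : U -> V -> W -> X) u v :
  ktrilinear F -> klinear (F u v).
Proof. by move=> [_ [_ F_lin]] a x y; apply: F_lin. Qed.

Lemma ktrilinear_lr U V W X (F : U -> V -> W -> X) :
  (forall v w, klinear (fun u => F u v w)) -> (forall u w, klinear (fun v => F u v w)) ->
  (forall u v, klinear (F u v)) -> ktrilinear F.
Proof. by move=> F1 F2 F3; do ![split] => a x y z w; [apply: F1 | apply: F2 | apply: F3]. Qed.

Lemma ktrilinear_comp U V W U' V' W' X (F : U' -> V' -> W' -> X)
    (g1 : U -> U') (g2 : V -> V') (g3 : W -> W') :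
  ktrilinear F -> klinear g1 -> klinear g2 -> klinear g3 ->
  ktrilinear (fun u v w => F (g1 u) (g2 v) (g3 w)).
Proof.
move=> F_tri g1_lin g2_lin g3_lin; apply: ktrilinear_lr => [v w|u w|u v].
- exact: (klinear_comp (g := fun z => F z (g2 v) (g3 w)) (ktrilinear1 _ _ F_tri) g1_lin).
- exact: (klinear_comp (g := fun z => F (g1 u) z (g3 w)) (ktrilinear2 _ _ F_tri) g2_lin).
- exact: klinear_comp (ktrilinear3 _ _ F_tri) g3_lin.
Qed.

Lemma sum_ktrilinear U V W X I (s : seq I) (F : I -> U -> V -> W -> X) :
  (forall i, ktrilinear (F i)) -> ktrilinear (fun u v w => \sum_(i <- s) F i u v w).
Proof.
move=> F_tri; apply: ktrilinear_lr => *; apply: sum_klinear => i.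
- exact: ktrilinear1.
- exact: ktrilinear2.
- exact: ktrilinear3.
Qed.

Lemma ktrilinear_bilinear23 U V W X (F : U -> V -> W -> X) u :
  ktrilinear F -> kbilinear (F u).
Proof. by move=> F_tri; apply: kbilinear_lr => *; [apply: ktrilinear2 | apply: ktrilinear3]. Qed.

Lemma ktrilinear_bilinear12 U V W X (F : U -> V -> W -> X) w :
  ktrilinear F -> kbilinear (fun u v => F u v w).
Proof. by move=> F_tri; apply: kbilinear_lr => *; [apply: ktrilinear1 | apply: ktrilinear2]. Qed.

Definition teval U V X (f : U -> V -> X) (s : tensor U V) : X := \sum_(x <- s) f x.1 x.2.

Lemma teqE U V X (s t : tensor U V) (f : U -> V -> X) :
  teq s t -> kbilinear f -> teval f s = teval f t.
Proof. by move=> st f_bil; apply: st. Qed.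

Lemma teval_cat U V X (f : U -> V -> X) s t : teval f (s ++ t) = teval f s + teval f t.
Proof. exact: big_cat. Qed.

Lemma teval_tscale U V X (f : U -> V -> X) a s :
  kbilinear f -> teval f (tscale a s) = a *: teval f s.
Proof.
move=> f_bil; rewrite /teval big_map scaler_sumr; apply: eq_bigr => x _.
exact: (klinearZ (kbilinearl _ f_bil)).
Qed.

Lemma teval_tmap U V U' V' X (f : U' -> V' -> X) (g : U -> U') (h : V -> V') s :
  teval f (tmap g h s) = teval (fun u v => f (g u) (h v)) s.
Proof. exact: big_map. Qed.

Lemma teval_tmul (H M N P : lmodType k) X (mH : H -> H -> H) (m : M -> N -> P) (f : H -> P -> X) s t :
  teval f (tmul mH m s t) = \sum_(x <- s) \sum_(y <- t) f (mH x.1 y.1) (m x.2 y.2).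
Proof. exact: big_allpairs_dep. Qed.

Lemma teval_flatten U V X I (f : U -> V -> X) (F : I -> tensor U V) (s : seq I) :
  teval f (flatten [seq F i | i <- s]) = \sum_(i <- s) teval f (F i).
Proof. by rewrite /teval big_flatten big_map. Qed.

Lemma teval_klinear U V X Y (f : U -> V -> X) (phi : Y -> tensor U V) :
  tlinear phi -> kbilinear f -> klinear (fun w => teval f (phi w)).
Proof. by move=> phi_lin f_bil a x y; rewrite (teqE (phi_lin a x y) f_bil) teval_cat teval_tscale. Qed.

Lemma tmap_tlinear U V U' V' Y (g : U -> U') (h : V -> V') (phi : Y -> tensor U V) :
  klinear g -> klinear h -> tlinear phi -> tlinear (fun w => tmap g h (phi w)).
Proof.
move=> g_lin h_lin phi_lin a x y X f f_bil; rewrite -!/(teval f _).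
rewrite teval_cat teval_tscale // !teval_tmap.
exact: (teval_klinear phi_lin (kbilinear_comp f_bil g_lin h_lin)).
Qed.

Lemma teq_sym U V (s t : tensor U V) : teq s t -> teq t s.
Proof. by move=> st X f f_bil; rewrite st. Qed.

Lemma teq_trans U V (s t u : tensor U V) : teq s t -> teq t u -> teq s u.
Proof. by move=> st tu X f f_bil; rewrite st ?tu. Qed.

Lemma teq_tmap U V U' V' (g : U -> U') (h : V -> V') s s' :
  klinear g -> klinear h -> teq s s' -> teq (tmap g h s) (tmap g h s').
Proof.
move=> g_lin h_lin ss' X f f_bil; rewrite -!/(teval f _) !teval_tmap.
exact: teqE ss' (kbilinear_comp f_bil g_lin h_lin).
Qed.

Section ComponentwiseProduct.
Variables (H M N P : lmodType k) (mH : H -> H -> H) (m : M -> N -> P).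
Hypotheses (mH_bil : kbilinear mH) (m_bil : kbilinear m).

Lemma tmul_bilinearl X (f : H -> P -> X) (t : tensor H N) : kbilinear f ->
  kbilinear (fun h x => \sum_(y <- t) f (mH h y.1) (m x y.2)).
Proof.
move=> f_bil; apply: sum_kbilinear => y.
exact: kbilinear_comp f_bil (kbilinearl _ mH_bil) (kbilinearl _ m_bil).
Qed.

Lemma tmul_bilinearr X (f : H -> P -> X) (x : H * M) : kbilinear f ->
  kbilinear (fun h y => f (mH x.1 h) (m x.2 y)).
Proof. by move=> f_bil; apply: kbilinear_comp f_bil (kbilinearr _ mH_bil) (kbilinearr _ m_bil). Qed.

Lemma teq_tmul_l s s' t : teq s s' -> teq (tmul mH m s t) (tmul mH m s' t).
Proof.
move=> ss' X f f_bil; rewrite -!/(teval f _) !teval_tmul.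
exact: teqE ss' (tmul_bilinearl t f_bil).
Qed.

Lemma teq_tmul_r s t t' : teq t t' -> teq (tmul mH m s t) (tmul mH m s t').
Proof.
move=> tt' X f f_bil; rewrite -!/(teval f _) !teval_tmul.
by apply: eq_bigr => x _; apply: teqE tt' (tmul_bilinearr x f_bil).
Qed.

Lemma teval_tmul_klinearl Y X (f : H -> P -> X) (phi : Y -> tensor H M) t :
  tlinear phi -> kbilinear f -> klinear (fun w => teval f (tmul mH m (phi w) t)).
Proof.
move=> phi_lin f_bil a x y; rewrite !teval_tmul.
exact: (teval_klinear phi_lin (tmul_bilinearl t f_bil)).
Qed.

Lemma teval_tmul_klinearr Y X (f : H -> P -> X) (phi : Y -> tensor H N) s :
  tlinear phi -> kbilinear f -> klinear (fun w => teval f (tmul mH m s (phi w))).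
Proof.
move=> phi_lin f_bil.
have := sum_klinear s (fun x => teval_klinear phi_lin (tmul_bilinearr x f_bil)).
by move=> sum_lin a x y; rewrite !teval_tmul; apply: sum_lin.
Qed.

End ComponentwiseProduct.

End Multilinear.

Section FirstOrderCalculus.
Variable k : fieldType.
Implicit Types X : lmodType k.
Variables (A : lmodType k) (al ali : A -> A) (mulA : A -> A -> A) (oneA : A).
Variables (G : lmodType k) (ga gai : G -> G) (la : A -> G -> G) (ra : G -> A -> G).
Variable d : A -> G.
Hypothesis A_alg : hom_algebra al ali mulA oneA.
Hypothesis G_fodc : hom_FODC al mulA oneA ga gai la ra d.

Let aliK : cancel ali al. Proof. by case: A_alg => [[_ []]]. Qed.
Let gaK : cancel ga gai. Proof. by case: G_fodc => [[[_ []]]]. Qed.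
Let gaiK : cancel gai ga. Proof. by case: G_fodc => [[[_ []]]]. Qed.
Let la_bil : kbilinear la. Proof. by case: G_fodc => [[_ []]]. Qed.
Let ra_bil : kbilinear ra. Proof. by case: G_fodc => [[_ [_ []]]]. Qed.
Let ga_la a m : ga (la a m) = la (al a) (ga m).
Proof. by case: G_fodc => [[_ [_ [_ []]]]]. Qed.
Let la_assoc a b m : la (al a) (la b m) = la (mulA a b) (ga m).
Proof. by case: G_fodc => [[_ [_ [_ [_ [_ [/(_ a b m) []]]]]]]]. Qed.
Let la1 m : la oneA m = ga m.
Proof. by case: G_fodc => [[_ [_ [_ [_ [_ [/(_ oneA oneA m) []]]]]]]]. Qed.
Let ra1 m : ra m oneA = ga m.
Proof. by case: G_fodc => [[_ [_ [_ [_ [_ [_ [/(_ m oneA oneA) []]]]]]]]]. Qed.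
Let la_ra a m b : la (al a) (ra m b) = ra (la a m) (al b).
Proof. by case: G_fodc => [[_ [_ [_ [_ [_ [_ [_ ->]]]]]]]]. Qed.
Let d_lin : klinear d. Proof. by case: G_fodc => [_ []]. Qed.
Let d_leibniz a b : d (mulA a b) = la a (d b) + ra (d a) b.
Proof. by case: G_fodc => [_ [_ []]]. Qed.
Let d_al a : d (al a) = ga (d a). Proof. by case: G_fodc => [_ [_ [_ []]]]. Qed.
Let la_d_bil : kbilinear (fun a b => la a (d b)).
Proof. exact: kbilinear_comp la_bil (@klinear_id _ _) d_lin. Qed.
Let ga_lin : klinear ga. Proof. by case: G_fodc => [[[]]]. Qed.
Let gai_lin : klinear gai. Proof. exact: (klinear_can ga_lin gaK gaiK). Qed.

Lemma la_dform_assoc a b c : la (al a) (la b (d c)) = la (mulA a b) (d (al c)).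
Proof. by rewrite la_assoc d_al. Qed.

Lemma ra_dform a b c :
  ra (la a (d b)) (al c) = la (al a) (d (mulA b c)) - la (mulA a b) (d (al c)).
Proof.
have ra_db : ra (d b) c = d (mulA b c) - la b (d c) by rewrite d_leibniz addrC addKr.
by rewrite -la_ra ra_db (klinearB (kbilinearr _ la_bil)) la_dform_assoc.
Qed.

Lemma dform_span w : exists s : seq (A * A), w = \sum_(x <- s) la x.1 (d x.2).
Proof.
case: G_fodc => [_ [_ [_ [_ /(_ w) [s ->]]]]].
exists (flatten [seq [:: (al x.1.1, mulA x.1.2 (ali x.2)); (- mulA x.1.1 x.1.2, x.2)] | x <- s]).
rewrite big_flatten big_map; apply: eq_bigr => x _.
by rewrite big_cons big_seq1 /= -{1}[x.2]aliK ra_dform aliK (klinearN (kbilinearl _ la_bil)).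
Qed.

Lemma dform_ext X (L1 L2 : G -> X) : klinear L1 -> klinear L2 ->
  (forall a b, L1 (la a (d b)) = L2 (la a (d b))) -> L1 =1 L2.
Proof.
move=> L1_lin L2_lin L12 w; have [s ->] := dform_span w.
by rewrite (klinear_sum L1_lin) (klinear_sum L2_lin); apply: eq_bigr => x _; apply: L12.
Qed.

Lemma gai_dform a b : gai (la a (d b)) = la (ali a) (d (ali b)).
Proof. by apply: (can_inj gaK); rewrite gaiK ga_la -d_al !aliK. Qed.

Lemma d_la1 a : d a = la oneA (d (ali a)).
Proof. by rewrite la1 -d_al aliK. Qed.

Lemma d_ra1 a : d a = ra (d (ali a)) oneA.
Proof. by rewrite ra1 -d_al aliK. Qed.

Definition dform_repr w : seq (A * A) :=
  proj1_sig (constructive_indefinite_description _ (dform_span w)).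

Lemma dform_reprE w : w = \sum_(x <- dform_repr w) la x.1 (d x.2).
Proof. exact: proj2_sig (constructive_indefinite_description _ (dform_span w)). Qed.

Section Coaction.
Variables (H : lmodType k) (be bei : H -> H) (mulH : H -> H -> H) (oneH : H).
Variables (Delta : H -> tensor H H) (eps : H -> k) (rho : A -> tensor H A).
Hypothesis H_bialg : hom_bialgebra be bei mulH oneH Delta eps.
Hypothesis A_comod : hom_comodule_algebra be bei mulH oneH Delta eps al ali mulA oneA rho.

Let beK : cancel be bei. Proof. by case: H_bialg => [[[_ []]]]. Qed.
Let beiK : cancel bei be. Proof. by case: H_bialg => [[[_ []]]]. Qed.
Let mulH_bil : kbilinear mulH. Proof. by case: H_bialg => [[_ []]]. Qed.
Let beM a b : be (mulH a b) = mulH (be a) (be b). Proof. by case: H_bialg => [[_ [_ []]]]. Qed.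
Let mulH_assoc a b c : mulH (be a) (mulH b c) = mulH (mulH a b) (be c).
Proof. by case: H_bialg => [[_ [_ [_ [_ []]]]]]. Qed.
Let mul1H a : mulH oneH a = be a.
Proof. by case: H_bialg => [[_ [_ [_ [_ [_ /(_ a) []]]]]]]. Qed.
Let mulH1 a : mulH a oneH = be a.
Proof. by case: H_bialg => [[_ [_ [_ [_ [_ /(_ a) []]]]]]]. Qed.
Let Delta_lin : tlinear Delta. Proof. by case: H_bialg => [_ [[_ []]]]. Qed.
Let eps_lin : klinear (eps : H -> k^o). Proof. by case: H_bialg => [_ [[_ [_ []]]]]. Qed.
Let DeltaM a b : teq (Delta (mulH a b)) (tmul mulH mulH (Delta a) (Delta b)).
Proof. by case: H_bialg => [_ [_ []]]. Qed.
Let epsM a b : eps (mulH a b) = eps a * eps b.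
Proof. by case: H_bialg => [_ [_ [_ [_ []]]]]. Qed.
Let rho_lin : tlinear rho. Proof. by case: A_comod => [_ [[_ []]]]. Qed.
Let rho_al a : teq (rho (al a)) (tmap be al (rho a)).
Proof. by case: A_comod => [_ [[_ [_ []]]]]. Qed.
Let rho_counit a : \sum_(x <- rho a) eps x.1 *: x.2 = ali a.
Proof. by case: A_comod => [_ [[_ [_ [_ [_ ->]]]]]]. Qed.
Let rhoM a b : teq (rho (mulA a b)) (tmul mulH mulA (rho a) (rho b)).
Proof. by case: A_comod => [_ [_ []]]. Qed.
Let rho1 : teq (rho oneA) [:: (oneH, oneA)]. Proof. by case: A_comod => [_ [_ []]]. Qed.

Let beiM a b : bei (mulH a b) = mulH (bei a) (bei b).
Proof. by apply: (can_inj beK); rewrite beM !beiK. Qed.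
Let bei_lin : klinear bei.
Proof. by have [[[be_lin _] _] _] := H_bialg; exact: (klinear_can be_lin beK beiK). Qed.

Definition coact_coact a : tensor3 H H A := [seq (bei x.1, y.1, y.2) | x <- rho a, y <- rho x.2].
Definition comult_coact a : tensor3 H H A := [seq (y.1, y.2, ali x.2) | x <- rho a, y <- Delta x.1].

Let rho_coassoc a : teq3 (coact_coact a) (comult_coact a).
Proof. by case: A_comod => [_ [[_ [_ [_ [coassoc _]]]] _]]; apply: coassoc. Qed.

Definition coact_dform a b : tensor H G := tmul mulH la (rho a) (tmap id d (rho b)).

Definition dform_coaction (phi : G -> tensor H G) : Prop :=
  [/\ tlinear phi, forall w, teq (phi (ga w)) (tmap be ga (phi w))
    & forall a b, teq (phi (la a (d b))) (coact_dform a b)].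

Lemma teval_coact_dform X (f : H -> G -> X) a b :
  teval f (coact_dform a b) = \sum_(x <- rho a) \sum_(y <- rho b) f (mulH x.1 y.1) (la x.2 (d y.2)).
Proof. by rewrite teval_tmul; apply: eq_bigr => x _; rewrite big_map. Qed.

Lemma teq_coact_dform a b s t : teq (rho a) s -> teq (rho b) t ->
  teq (coact_dform a b) (tmul mulH la s (tmap id d t)).
Proof.
move=> rho_as rho_bt; apply: teq_trans (teq_tmul_l mulH_bil la_bil _ rho_as) _.
exact: (teq_tmul_r mulH_bil la_bil _ (teq_tmap (@klinear_id _ _) d_lin rho_bt)).
Qed.

Lemma coact_dform_bilinear X (f : H -> G -> X) : kbilinear f ->
  kbilinear (fun a b => teval f (coact_dform a b)).
Proof.
move=> f_bil; apply: kbilinear_lr => [b|a].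
  exact: (teval_tmul_klinearl mulH_bil la_bil _ rho_lin f_bil).
exact: (teval_tmul_klinearr mulH_bil la_bil _ (tmap_tlinear (@klinear_id _ _) d_lin rho_lin) f_bil).
Qed.

Lemma teval_coact_dform_al X (f : H -> G -> X) a b : kbilinear f ->
  teval f (coact_dform (al a) (al b)) = teval (fun u v => f (be u) (ga v)) (coact_dform a b).
Proof.
move=> f_bil; rewrite (teqE (teq_coact_dform (rho_al a) (rho_al b)) f_bil) !teval_tmul big_map.
apply: eq_bigr => x _; rewrite !big_map; apply: eq_bigr => y _ /=.
by rewrite beM ga_la -d_al.
Qed.

Lemma left_covariant_dform_coaction :
  left_covariant be bei mulH Delta eps al rho ga gai la ra d -> exists phi, dform_coaction phi.
Proof.
case=> phi [[_ [phi_lin [phi_ga _]]] [phi_cov phi_d]]; exists phi; split=> // a b.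
have -> : la a (d b) = la (al (ali a)) (ra (d (ali b)) oneA) by rewrite -d_ra1 aliK.
apply: teq_trans (phi_cov _ _ _) _; rewrite aliK; apply: (teq_tmul_r mulH_bil la_bil).
apply: teq_trans (teq_tmul_l mulH_bil ra_bil _ (phi_d _)) _.
apply: teq_trans (teq_tmul_r mulH_bil ra_bil _ rho1) _.
rewrite -{2}[b]aliK; apply: teq_trans _ (teq_sym (teq_tmap (@klinear_id _ _) d_lin (rho_al _))).
move=> X f f_bil; rewrite -!/(teval f _) teval_tmul !teval_tmap /tmap big_map.
by apply: eq_bigr => y _; rewrite big_seq1 /= mulH1 ra1 -d_al.
Qed.

Lemma coact_pair_coassoc X (F : H -> H -> G -> X) a b : ktrilinear F ->
  \sum_(p <- coact_coact a) \sum_(q <- coact_coact b)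
      F (mulH p.1.1 q.1.1) (mulH p.1.2 q.1.2) (la p.2 (d q.2))
  = \sum_(p <- comult_coact a) \sum_(q <- comult_coact b)
      F (mulH p.1.1 q.1.1) (mulH p.1.2 q.1.2) (la p.2 (d q.2)).
Proof.
move=> F_tri.
have F_tril t : ktrilinear (fun u v c =>
    \sum_(q <- t) F (mulH u q.1.1) (mulH v q.1.2) (la c (d q.2))).
  apply: sum_ktrilinear => q.
  by apply: ktrilinear_comp F_tri _ _ _; apply: kbilinearl.
have F_trir p : ktrilinear (fun u v c => F (mulH p.1.1 u) (mulH p.1.2 v) (la p.2 (d c))).
  apply: ktrilinear_comp F_tri _ _ _; try exact: kbilinearr.
  exact: klinear_comp (kbilinearr _ la_bil) d_lin.
rewrite (rho_coassoc a (F_tril _)); apply: eq_bigr => p _.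
exact: (rho_coassoc b (F_trir p)).
Qed.

Section DformCoaction.
Variable phi : G -> tensor H G.
Hypothesis phi_coact : dform_coaction phi.

Let phi_lin : tlinear phi. Proof. by case: phi_coact. Qed.
Let phi_dform a b : teq (phi (la a (d b))) (coact_dform a b).
Proof. by case: phi_coact. Qed.

Lemma teval_phi_dform X (f : H -> G -> X) a b : kbilinear f ->
  teval f (phi (la a (d b))) = teval f (coact_dform a b).
Proof. exact: teqE (phi_dform a b). Qed.

Lemma dform_coaction_coassoc w :
  teq3 [seq (bei x.1, y.1, y.2) | x <- phi w, y <- phi x.2]
       [seq (y.1, y.2, gai x.2) | x <- phi w, y <- Delta x.1].
Proof.
move=> X F F_tri; rewrite !big_allpairs_dep /=.
have bil1 : kbilinear (fun h m => teval (F (bei h)) (phi m)).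
  apply: kbilinear_lr => [m|h]; last exact: teval_klinear phi_lin (ktrilinear_bilinear23 _ F_tri).
  apply: sum_klinear => y.
  exact: (klinear_comp (g := fun u => F u y.1 y.2) (ktrilinear1 _ _ F_tri) bei_lin).
have bil2 : kbilinear (fun h m => teval (fun u v => F u v (gai m)) (Delta h)).
  apply: kbilinear_lr => [m|h]; first exact: teval_klinear Delta_lin (ktrilinear_bilinear12 _ F_tri).
  by apply: sum_klinear => y; apply: klinear_comp (ktrilinear3 _ _ F_tri) gai_lin.
apply: (dform_ext (teval_klinear phi_lin bil1) (teval_klinear phi_lin bil2)) => {w} a b.
rewrite !teval_phi_dform // !teval_coact_dform.
transitivity (\sum_(p <- coact_coact a) \sum_(q <- coact_coact b)
    F (mulH p.1.1 q.1.1) (mulH p.1.2 q.1.2) (la p.2 (d q.2))).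
  rewrite big_allpairs_dep; apply: eq_bigr => x _ /=.
  under eq_bigr => y _ do
    rewrite (teval_phi_dform _ _ (ktrilinear_bilinear23 _ F_tri)) teval_coact_dform beiM.
  under [RHS]eq_bigr => x' _ do rewrite big_allpairs_dep.
  by rewrite exchange_big.
rewrite coact_pair_coassoc // big_allpairs_dep; apply: eq_bigr => x _ /=.
under [RHS]eq_bigr => y _ do
  rewrite (teqE (DeltaM _ _) (ktrilinear_bilinear12 _ F_tri)) teval_tmul gai_dform.
under eq_bigr => x' _ do rewrite big_allpairs_dep.
by rewrite exchange_big.
Qed.

Lemma dform_coaction_counit w : \sum_(x <- phi w) eps x.1 *: x.2 = gai w.
Proof.
have eps_bil : kbilinear (fun h (m : G) => eps h *: m) := scale_kbilinear _ eps_lin.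
apply: (dform_ext (teval_klinear phi_lin eps_bil) gai_lin) => {w} a b.
rewrite teval_phi_dform // teval_coact_dform gai_dform -(rho_counit a) -(rho_counit b).
rewrite (klinear_sum (kbilinearl _ la_bil)); apply: eq_bigr => x _.
rewrite (klinear_sum (klinear_comp (kbilinearr _ la_bil) d_lin)); apply: eq_bigr => y _.
rewrite epsM (klinearZ d_lin) (klinearZ (kbilinearr _ la_bil)) (klinearZ (kbilinearl _ la_bil)).
by rewrite scalerA mulrC.
Qed.

Lemma dform_coaction_la a w : teq (phi (la (al a) w)) (tmul mulH la (rho (al a)) (phi w)).
Proof.
move=> X f f_bil; rewrite -!/(teval f _).
have L1_lin : klinear (fun w => teval f (phi (la (al a) w))).
  exact: klinear_comp (teval_klinear phi_lin f_bil) (kbilinearr _ la_bil).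
apply: (dform_ext L1_lin (teval_tmul_klinearr mulH_bil la_bil _ phi_lin f_bil)) => {w} a' b'.
rewrite la_dform_assoc teval_phi_dform //.
rewrite (teqE (teq_coact_dform (rhoM a a') (rho_al b')) f_bil).
rewrite (teqE (teq_tmul_l mulH_bil la_bil _ (rho_al a)) f_bil).
rewrite (teqE (teq_tmul_r mulH_bil la_bil _ (phi_dform a' b')) f_bil).
rewrite !teval_tmul big_allpairs_dep big_map; apply: eq_bigr => x _.
rewrite big_allpairs_dep; apply: eq_bigr => x' _; rewrite !big_map; apply: eq_bigr => y' _ /=.
by rewrite mulH_assoc la_assoc d_al.
Qed.

Lemma dform_coaction_ra w c : teq (phi (ra w (al c))) (tmul mulH ra (phi w) (rho (al c))).
Proof.
move=> X f f_bil; rewrite -!/(teval f _).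
have L1_lin : klinear (fun w => teval f (phi (ra w (al c)))).
  exact: klinear_comp (teval_klinear phi_lin f_bil) (kbilinearl _ ra_bil).
apply: (dform_ext L1_lin (teval_tmul_klinearl mulH_bil ra_bil _ phi_lin f_bil)) => {w} a b.
rewrite ra_dform (klinearB (teval_klinear phi_lin f_bil)) !teval_phi_dform //.
rewrite (teqE (teq_coact_dform (rho_al a) (rhoM b c)) f_bil).
rewrite (teqE (teq_coact_dform (rhoM a b) (rho_al c)) f_bil).
rewrite (teqE (teq_tmul_l mulH_bil ra_bil _ (phi_dform a b)) f_bil).
rewrite (teqE (teq_tmul_r mulH_bil ra_bil _ (rho_al c)) f_bil).
rewrite !teval_tmul big_map !big_allpairs_dep -sumrB; apply: eq_bigr => x _ /=.
rewrite big_map big_allpairs_dep [in RHS]big_map -sumrB; apply: eq_bigr => y _.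
rewrite !big_map -sumrB; apply: eq_bigr => z _ /=.
by rewrite ra_dform (klinearB (kbilinearr _ f_bil)) mulH_assoc.
Qed.

Lemma dform_coaction_d a : teq (phi (d a)) (tmap id d (rho a)).
Proof.
rewrite d_la1; apply: teq_trans (phi_dform _ _) _.
apply: teq_trans (teq_tmul_l mulH_bil la_bil _ rho1) _.
rewrite -{2}[a]aliK; apply: teq_trans _ (teq_sym (teq_tmap (@klinear_id _ _) d_lin (rho_al _))).
move=> X f f_bil; rewrite -!/(teval f _) teval_tmul !teval_tmap big_seq1 /tmap big_map.
by apply: eq_bigr => y _; rewrite /= mul1H la1 -d_al.
Qed.

Lemma dform_coaction_left_covariant :
  left_covariant be bei mulH Delta eps al rho ga gai la ra d.
Proof.
have G_hobj : hobj ga gai by case: G_fodc => [[]].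
have [_ phi_ga _] := phi_coact.
exists phi; split.
  do 3!split=> //.
  by split; [exact: dform_coaction_coassoc | exact: dform_coaction_counit].
split=> [a b w|]; last exact: dform_coaction_d.
apply: teq_trans (dform_coaction_la _ _) (teq_tmul_r mulH_bil la_bil _ _).
by rewrite -[b]aliK; apply: dform_coaction_ra.
Qed.

Lemma dform_coaction_sum_eq0 (s : seq (A * A)) : \sum_(x <- s) la x.1 (d x.2) = 0 ->
  teq (flatten [seq coact_dform x.1 x.2 | x <- s]) [::].
Proof.
move=> s0 X f f_bil; rewrite -!/(teval f _) teval_flatten [RHS]big_nil.
have fphi_lin := teval_klinear phi_lin f_bil.
under eq_bigr => x _ do rewrite -(teval_phi_dform _ _ f_bil).
by rewrite -(klinear_sum fphi_lin) s0; apply: (klinear0 fphi_lin).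
Qed.

End DformCoaction.

Section VanishingDforms.
Hypothesis dform_vanish : forall s : seq (A * A), \sum_(x <- s) la x.1 (d x.2) = 0 ->
  teq (flatten [seq coact_dform x.1 x.2 | x <- s]) [::].

Lemma coact_dform_sum_eq X (f : H -> G -> X) (s t : seq (A * A)) : kbilinear f ->
  \sum_(x <- s) la x.1 (d x.2) = \sum_(x <- t) la x.1 (d x.2) ->
  \sum_(x <- s) teval f (coact_dform x.1 x.2) = \sum_(x <- t) teval f (coact_dform x.1 x.2).
Proof.
move=> f_bil st; apply/eqP; rewrite -subr_eq0; apply/eqP.
have vanish_st : \sum_(x <- s ++ [seq (- x.1, x.2) | x <- t]) la x.1 (d x.2) = 0.
  by rewrite big_cat big_map /= (sum_kbilinearN _ la_d_bil) st subrr.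
have := dform_vanish vanish_st f_bil.
rewrite -/(teval f (flatten _)) teval_flatten big_cat big_map /= big_nil.
by rewrite (sum_kbilinearN _ (coact_dform_bilinear f_bil)).
Qed.

Definition dform_coact w : tensor H G := flatten [seq coact_dform x.1 x.2 | x <- dform_repr w].

Lemma dform_coact_coaction : dform_coaction dform_coact.
Proof.
have teval_dform_coact X (f : H -> G -> X) w :
    teval f (dform_coact w) = \sum_(x <- dform_repr w) teval f (coact_dform x.1 x.2).
  exact: teval_flatten.
split=> [c w w' X f f_bil|w X f f_bil|a b X f f_bil]; rewrite -!/(teval f _).
- rewrite teval_cat teval_tscale // !teval_dform_coact.
  rewrite (coact_dform_sum_eq (t := [seq (c *: x.1, x.2) | x <- dform_repr w] ++ dform_repr w') f_bil).
    by rewrite big_cat big_map /= (sum_kbilinearZ _ _ (coact_dform_bilinear f_bil)).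
  by rewrite big_cat big_map /= (sum_kbilinearZ _ _ la_d_bil) -!dform_reprE.
- rewrite teval_tmap !teval_dform_coact.
  rewrite (coact_dform_sum_eq (t := [seq (al x.1, al x.2) | x <- dform_repr w]) f_bil).
    by rewrite big_map; apply: eq_bigr => x _; apply: teval_coact_dform_al.
  rewrite big_map /= -dform_reprE {1}(dform_reprE w) (klinear_sum ga_lin).
  by apply: eq_bigr => x _; rewrite ga_la -d_al.
- rewrite teval_dform_coact (coact_dform_sum_eq (t := [:: (a, b)]) f_bil) ?big_seq1 //.
  by rewrite -dform_reprE.
Qed.

End VanishingDforms.

End Coaction.
End FirstOrderCalculus.

Theorem mainTheorem1 (k : fieldType)
  (H : lmodType k) (be bei : H -> H) (mulH : H -> H -> H) (oneH : H)
  (Delta : H -> tensor H H) (eps : H -> k)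
  (A : lmodType k) (al ali : A -> A) (mulA : A -> A -> A) (oneA : A)
  (rho : A -> tensor H A)
  (G : lmodType k) (ga gai : G -> G)
  (la : A -> G -> G) (ra : G -> A -> G) (d : A -> G) :
  hom_bialgebra be bei mulH oneH Delta eps ->
  hom_comodule_algebra be bei mulH oneH Delta eps al ali mulA oneA rho ->
  hom_FODC al mulA oneA ga gai la ra d ->
  (left_covariant be bei mulH Delta eps al rho ga gai la ra d <->
   exists phi : G -> tensor H G,
     [/\ tlinear phi,
         (forall w, teq (phi (ga w)) (tmap be ga (phi w))) &
         (forall a b, teq (phi (la a (d b))) (tmul mulH la (rho a) (tmap id d (rho b))))])
  /\
  ((exists phi : G -> tensor H G,
     [/\ tlinear phi,
         (forall w, teq (phi (ga w)) (tmap be ga (phi w))) &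
         (forall a b, teq (phi (la a (d b))) (tmul mulH la (rho a) (tmap id d (rho b))))])
   <->
   (forall s : seq (A * A),
      \sum_(x <- s) la x.1 (d x.2) = 0 ->
      teq (flatten [seq tmul mulH la (rho x.1) (tmap id d (rho x.2)) | x <- s]) [::])).
Proof.
move=> H_bialg A_comod G_fodc; have A_alg := A_comod.1.
split; split.
- exact: (left_covariant_dform_coaction A_alg G_fodc H_bialg A_comod).
- by case=> phi /(dform_coaction_left_covariant A_alg G_fodc H_bialg A_comod).
- by case=> phi /dform_coaction_sum_eq0.
- by move/(dform_coact_coaction A_alg G_fodc H_bialg A_comod); eexists; eassumption.
Qed.
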